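(* Let $\mathcal{S}$ be a nonempty semigroup with operation $*$, and let $E(\mathcal{S})$ be its set of idempotents. Suppose $|\mathcal{S}\setminus E(\mathcal{S})|$ is finite. Then every $\mathcal{S}$-valued sequence $T=a_1a_2\cdots a_{\ell}$ of length $\ell=|\mathcal{S}\setminus E(\mathcal{S})|+1$ is not strongly idempotent-product free; that is, there exist indices $1\le i_1<i_2<\cdots<i_t\le \ell$ with $t\ge 1$ such that $a_{i_1}*a_{i_2}*\cdots*a_{i_t}\in E(\mathcal{S})$.
   Context: An element $x$ of a semigroup $\mathcal{S}$ is an idempotent if $x*x=x$. A sequence means a finite ordered list of (not necessarily distinct) elements of $\mathcal{S}$; a subsequence keeps terms in their original order. A sequence is strongly idempotent-product free if no nonempty subsequence has product (taken in the natural order of the sequence) equal to an idempotent. *)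

From mathcomp Require Import all_boot.
From Stdlib Require List.
Set Implicit Arguments. Unset Strict Implicit. Unset Printing Implicit Defensive.

Section Semigroup.
Variables (S : Type) (op : S -> S -> S).

Definition is_idempotent (x : S) : Prop := op x x = x.

Definition seq_prod (s : seq S) : option S :=
  match s with
  | [::] => None
  | x :: r => Some (foldl op x r)
  end.

(* A subsequence of T is [mask m T] with [size m = size T].
   T is strongly idempotent-product free if no nonempty subsequence has
   is_idempotent product. *)
Definition strongly_idempotent_product_free (T : seq S) : Prop :=
  forall m : bitseq, size m = size T ->
  forall p, seq_prod (mask m T) = Some p -> ~ is_idempotent p.

End Semigroup.

(* Let A_k be the set of products of nonempty subsequences of the first k terms
   of T.  If T were strongly idempotent-product free, every A_k would consist of
   non-idempotents, so the chain A_0 ⊆ A_1 ⊆ ... ⊆ A_l of length l + 1 would live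
   in a set of size l - 1 and hence stabilise at some step: A_(k+1) = A_k with
   k < l.  Then a := a_(k+1) lies in A_k and A_k * a ⊆ A_(k+1) = A_k, so all
   powers of a lie in the finite set A_k; two of them coincide, which makes some
   power of a idempotent, a contradiction. *)
From mathcomp Require Import all_boot.
From Stdlib Require List.
From Stdlib Require Import Classical ClassicalEpsilon FinFun.
From mathcomp Require Import zify.

Set Implicit Arguments.
Unset Strict Implicit.
Unset Printing Implicit Defensive.

Lemma exists_flat_step (f : nat -> nat) (n : nat) :
  (forall k, k < n -> f k <= f k.+1) -> f n < f 0 + n ->
  exists2 k, k < n & f k.+1 = f k.
Proof.
elim: n => [|n IHn] f_mono f_small; first by rewrite addn0 ltnn in f_small.
have [f_eq | f_neq] := eqVneq (f n.+1) (f n); first by exists n.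
have f_lt : f n < f n.+1 by rewrite ltn_neqAle eq_sym f_neq f_mono.
have [|k k_lt_n f_flat] := IHn (fun k k_lt => f_mono k (ltnW k_lt)); first by lia.
by exists k; first exact: ltnW.
Qed.

Lemma count_eq_sub_in (T : Type) (P Q : pred T) (l : list T) :
  (forall x, P x -> Q x) -> count P l = count Q l ->
  forall x, List.In x l -> Q x -> P x.
Proof.
move=> PQ; elim: l => //= y l IHl; have := sub_count PQ l.
case Py: (P y); case Qy: (Q y) => //=.
- by move=> _ /addnI /IHl sub_l x [<- //| /sub_l].
- by move: (PQ _ Py); rewrite Qy.
- by lia.
- by move=> _ /IHl sub_l x [<-|/sub_l //]; rewrite Qy.
Qed.

Lemma pigeonhole_nat (S : Type) (f : nat -> S) (l : list S) :
  (forall n, List.In (f n) l) -> exists i j, i < j /\ f i = f j.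
Proof.
move=> f_in; apply: NNPP => f_inj.
have inj_f : Injective f.
  move=> i j f_ij; case: (ltngtP i j) => // [i_lt_j | j_lt_i].
  - by case: f_inj; exists i, j.
  - by case: f_inj; exists j, i.
have in_l : List.incl (List.map f (List.seq 0 (size l).+1)) l.
  by move=> x /List.in_map_iff [n [<- _]].
have := List.NoDup_incl_length
  (Injective_map_NoDup inj_f (List.seq_NoDup (size l).+1 0)) in_l.
by rewrite List.length_map List.length_seq => /leP; rewrite ltnn.
Qed.

Lemma chain_stabilizes (S : Type) (P : nat -> S -> Prop) (l : list S) (n : nat) :
  size l < n ->
  (forall k x, k < n -> P k x -> P k.+1 x) ->
  (forall k x, k <= n -> P k x -> List.In x l) ->
  exists2 k, k < n & forall x, P k.+1 x -> P k x.
Proof.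
move=> l_lt_n P_mono P_in.
pose Pb k x : bool := excluded_middle_informative (P k x).
have PbP k x : Pb k x <-> P k x by rewrite /Pb; case: excluded_middle_informative.
pose f k := count (Pb k) l.
have f_mono k : k < n -> f k <= f k.+1.
  by move=> k_lt_n; apply: sub_count => x /PbP /(P_mono _ _ k_lt_n) /PbP.
have f_small : f n < f 0 + n by have := count_size (Pb n) l; rewrite /f; lia.
have [k k_lt_n f_flat] := exists_flat_step f_mono f_small.
exists k => // x /[dup] /(P_in _ _ k_lt_n) x_in /PbP Pbx; apply/PbP.
apply: count_eq_sub_in (esym f_flat) x x_in Pbx.
by move=> y /PbP /(P_mono _ _ k_lt_n) /PbP.
Qed.

Section Powers.
Variables (S : Type) (op : S -> S -> S).
Hypothesis op_assoc : forall x y z, op x (op y z) = op (op x y) z.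

(* [pw a n] is a^(n+1), so that every power has a nonzero exponent. *)
Fixpoint pw (a : S) (n : nat) : S :=
  if n is n'.+1 then op (pw a n') a else a.

Lemma pw_add a m n : op (pw a m) (pw a n) = pw a (m + n).+1.
Proof.
elim: n => [|n IHn] /=; first by rewrite addn0.
by rewrite op_assoc IHn addnS.
Qed.

Lemma pw_periodic a i q : pw a i = pw a (i + q) ->
  forall n k, pw a (i + n + k * q) = pw a (i + n).
Proof.
move=> pw_iq.
have shift n : pw a (i + n + q) = pw a (i + n).
  elim: n => [|n IHn]; first by rewrite addn0 -pw_iq.
  by rewrite addnS addSn /= IHn.
move=> n; elim=> [|k IHk]; first by rewrite mul0n addn0.
by rewrite mulSnr addnA -(addnA i n) shift addnA IHk.
Qed.

(* With period q = j - i, the exponent m = (i+1) q is a multiple of q with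
   m >= i + 1, so a^(2m) = a^m. *)
Lemma pw_idempotent_of_eq a i j : i < j -> pw a i = pw a j ->
  exists n, is_idempotent op (pw a n).
Proof.
move=> i_lt_j pw_ij; pose q := j - i; pose m := i.+1 * q.
have periodic := @pw_periodic a i q; rewrite (subnKC (ltnW i_lt_j)) in periodic.
exists m.-1; rewrite /is_idempotent pw_add.
have -> : (m.-1 + m.-1).+1 = i + (m.-1 - i) + i.+1 * q by rewrite /m /q; nia.
by rewrite periodic //; congr pw; rewrite /m /q; nia.
Qed.

Lemma finite_powers_idempotent a (l : list S) :
  (forall n, List.In (pw a n) l) -> exists n, is_idempotent op (pw a n).
Proof.
by move=> /pigeonhole_nat [i [j [i_lt_j pw_ij]]]; apply: pw_idempotent_of_eq pw_ij.
Qed.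

End Powers.

Section SubsequenceProducts.
Variables (S : Type) (op : S -> S -> S) (T : seq S) (x0 : S).

Lemma seq_prod_rcons s x a : seq_prod op s = Some x ->
  seq_prod op (rcons s a) = Some (op x a).
Proof. by case: s => //= y s [<-]; rewrite foldl_rcons. Qed.

(* [subprod k x] means x \in A_k. *)
Definition subprod (k : nat) (x : S) : Prop :=
  exists2 m : bitseq, size m = k & seq_prod op (mask m (take k T)) = Some x.

Lemma subprod_free k x : k <= size T -> subprod k x ->
  strongly_idempotent_product_free op T -> ~ is_idempotent op x.
Proof.
move=> k_le [m size_m prod_m] free; apply: (free (m ++ nseq (size T - k) false)).
  by rewrite size_cat size_nseq size_m subnKC.
rewrite -(cat_take_drop k T) mask_cat ?size_take_min ?size_m ?(minn_idPl k_le) //.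
by rewrite mask_false cats0.
Qed.

Lemma subprod_mono k x : k < size T -> subprod k x -> subprod k.+1 x.
Proof.
move=> k_lt [m size_m prod_m]; exists (rcons m false); first by rewrite size_rcons size_m.
by rewrite (take_nth x k_lt) mask_rcons ?cats0 // size_take k_lt.
Qed.

Lemma subprod_nth k : k < size T -> subprod k.+1 (nth x0 T k).
Proof.
move=> k_lt; exists (rcons (nseq k false) true); first by rewrite size_rcons size_nseq.
by rewrite (take_nth x0 k_lt) mask_rcons ?mask_false // size_take k_lt size_nseq.
Qed.

Lemma subprod_mulr k x : k < size T ->
  subprod k x -> subprod k.+1 (op x (nth x0 T k)).
Proof.
move=> k_lt [m size_m prod_m]; exists (rcons m true); first by rewrite size_rcons size_m.
rewrite (take_nth x0 k_lt) mask_rcons ?size_take ?k_lt // cats1.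
exact: seq_prod_rcons.
Qed.

Lemma subprod_pw k : k < size T ->
  (forall x, subprod k.+1 x -> subprod k x) ->
  forall n, subprod k (pw op (nth x0 T k) n).
Proof.
move=> k_lt stable; elim=> [|n IHn] /=; apply: stable.
- exact: subprod_nth.
- exact: subprod_mulr.
Qed.

End SubsequenceProducts.

Theorem proposition1p1 (S : Type) (op : S -> S -> S)
  (op_assoc : forall x y z, op x (op y z) = op (op x y) z)
  (x0 : S)
  (nonE : list S) (nonE_nodup : List.NoDup nonE)
  (nonE_spec : forall x, List.In x nonE <-> ~ is_idempotent op x)
  (T : seq S) (HT : size T = (size nonE).+1) :
  ~ strongly_idempotent_product_free op T.
Proof.
move=> free.
have subprod_nonE k x : k <= size T -> subprod op T k x -> List.In x nonE.
  by move=> k_le A_kx; apply/nonE_spec; exact: subprod_free k_le A_kx free.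
have nonE_lt : size nonE < size T by rewrite HT.
have [k k_lt stable] := chain_stabilizes nonE_lt (@subprod_mono _ op T) subprod_nonE.
have powers_in := subprod_pw x0 k_lt stable.
have [n idem] := finite_powers_idempotent op_assoc
  (fun n => subprod_nonE _ _ (ltnW k_lt) (powers_in n)).
exact: subprod_free (ltnW k_lt) (powers_in n) free idem.
Qed.
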